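(* Let $\Gamma$ be a signed graph on $n$ vertices and let $x=(x_1,\dots,x_n)^{\top}$ be a unit eigenvector of the adjacency matrix $A(\Gamma)$ corresponding to its largest eigenvalue $\lambda_1(\Gamma)$. Let $k$ be an integer. If $\lambda_1(\Gamma) > n-k$, then $x$ has at most $k-2$ zero components.
   Context: A signed graph $\Gamma=(G,\sigma)$ is a simple graph $G$ with a sign function $\sigma:E(G)\to\{-1,+1\}$. Its adjacency matrix $A(\Gamma)=(a_{ij})$ has $a_{ij}=\sigma(v_iv_j)$ if $v_i\sim v_j$ and $a_{ij}=0$ otherwise; $\lambda_1(\Gamma)$ denotes the largest eigenvalue of $A(\Gamma)$. *)

From HB Require Import structures.
From mathcomp Require Import all_boot all_order all_algebra.
From mathcomp Require Import reals.
Set Implicit Arguments. Unset Strict Implicit. Unset Printing Implicit Defensive.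
Import Order.TTheory GRing.Theory Num.Theory.
Local Open Scope ring_scope.

(* A signed graph on the vertex set 'I_n: a simple graph given by a symmetric
   irreflexive adjacency relation [e], together with a sign function on its
   edges, encoded as a symmetric map [neg] ([neg i j = true] means the edge
   ij has sign -1, otherwise +1; its values on non-edges are irrelevant). *)
Record signed_graph (n : nat) := SignedGraph {
  sg_adj : rel 'I_n;
  sg_neg : 'I_n -> 'I_n -> bool;
  sg_adj_sym : symmetric sg_adj;
  sg_adj_irr : irreflexive sg_adj;
  sg_neg_sym : forall i j, sg_neg i j = sg_neg j i
}.

Definition sg_adjmx (R : nzRingType) (n : nat) (G : signed_graph n) : 'M[R]_n :=
  \matrix_(i, j) (if sg_adj G i j then (if sg_neg G i j then -1 else 1) else 0).

Definition largest_eigenvalue (R : realType) (n : nat) (A : 'M[R]_n) (l : R) :=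
  eigenvalue A l /\ forall m, eigenvalue A m -> m <= l.

(* Let i be a coordinate where |x_i| is maximal.  Row i of A x = l x gives
   |l| |x_i| <= sum over the other j in the support of x of |x_j|, because the
   entries of A have modulus at most 1 and its diagonal vanishes.  Hence
   |l| + 1 is at most the support size n - #zeros, and l > n - k forces
   #zeros < k - 1. *)
From HB Require Import structures.
From mathcomp Require Import all_boot all_order all_algebra.
From mathcomp Require Import reals.
From mathcomp Require Import zify.
Set Implicit Arguments. Unset Strict Implicit. Unset Printing Implicit Defensive.
Import Order.TTheory GRing.Theory Num.Theory.
Local Open Scope ring_scope.

Section SignedAdjacencyEntries.

Variables (R : numDomainType) (n : nat) (G : signed_graph n).

Lemma sg_adjmx_diag (i : 'I_n) : sg_adjmx R G i i = 0.
Proof. by rewrite mxE sg_adj_irr. Qed.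

Lemma norm_sg_adjmx_le1 (i j : 'I_n) : `|sg_adjmx R G i j| <= 1.
Proof.
rewrite mxE; case: (sg_adj G i j); case: (sg_neg G i j);
  by rewrite ?normrN ?normr1 ?normr0.
Qed.

End SignedAdjacencyEntries.

Lemma exists_max_norm_entry (R : realDomainType) (n : nat) (x : 'cV[R]_n) :
  x != 0 -> exists2 i, x i 0 != 0 & forall j, `|x j 0| <= `|x i 0|.
Proof.
move=> x_neq0; have [i0 xi0_neq0] : exists i0, x i0 0 != 0.
  apply/existsP; apply: contraNT x_neq0 => /existsPn x0.
  by apply/eqP/matrixP => i j; rewrite ord1 mxE; apply/eqP/negPn/x0.
case: (@arg_maxP _ R _ i0 xpredT (fun i => `|x i 0|)) => // i _ max_i.
exists i => [|j]; last exact: max_i.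
by rewrite -normr_gt0 (lt_le_trans _ (max_i i0 isT)) ?normr_gt0.
Qed.

Section EigenvalueSupportBound.

Variables (R : realDomainType) (n : nat) (A : 'M[R]_n).
Hypothesis A_diag : forall i, A i i = 0.
Hypothesis A_norm_le1 : forall i j, `|A i j| <= 1.

Lemma norm_eigenvalue_add1_le_support (x : 'cV[R]_n) (l : R) :
  A *m x = l *: x -> x != 0 -> `|l| + 1 <= #|[set i | x i 0 != 0]|%:R.
Proof.
move=> Ax x_neq0; have [i xi_neq0 max_i] := exists_max_norm_entry x_neq0.
set S := [set i | x i 0 != 0].
have i_in_S : i \in S by rewrite inE.
have row_i : l * x i 0 = \sum_j A i j * x j 0.
  by have := congr1 (fun y : 'cV[R]_n => y i 0) Ax; rewrite !mxE => <-.
have bound_i : `|l| * `|x i 0| <= #|S :\ i|%:R * `|x i 0|.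
  rewrite -normrM row_i mulr_natl -sumr_const (le_trans (ler_norm_sum _ _ _)) //.
  rewrite [X in _ <= X]big_mkcond /=; apply: ler_sum => j _; rewrite !inE.
  have [->|_] /= := eqVneq j i; first by rewrite A_diag mul0r normr0.
  have [->|_] /= := eqVneq (x j 0) 0; first by rewrite mulr0 normr0.
  by rewrite normrM (le_trans _ (max_i j)) // ler_piMl.
rewrite (cardsD1 i S) i_in_S add1n -addn1 natrD lerD2r.
by rewrite ler_pM2r ?normr_gt0 in bound_i.
Qed.

End EigenvalueSupportBound.

Theorem lemma3p3 (R : realType) (n : nat) (G : signed_graph n)
    (lam1 : R) (x : 'cV[R]_n) (k : int) :
  largest_eigenvalue (sg_adjmx R G) lam1 ->
  sg_adjmx R G *m x = lam1 *: x ->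
  \sum_(i < n) x i 0 ^+ 2 = 1 ->
  lam1 > n%:R - k%:~R ->
  (#|[set i : 'I_n | x i 0 == 0]|%:Z <= k - 2)%R.
Proof.
move=> _ Ax norm_x lam1_gt.
have x_neq0 : x != 0.
  apply: contra_eq_neq norm_x => ->.
  by rewrite big1 1?eq_sym ?oner_eq0 // => i _; rewrite mxE expr0n.
have := norm_eigenvalue_add1_le_support
  (sg_adjmx_diag R G) (norm_sg_adjmx_le1 R G) Ax x_neq0.
set Z := [set i | x i 0 == 0]; set S := [set i | x i 0 != 0].
have card_ZS : (#|Z| + #|S| = n)%N.
  have -> : S = ~: Z by apply/setP => i; rewrite !inE.
  by rewrite cardsC card_ord.
move=> bound; have : (n%:Z - k + 1)%:~R < #|S|%:Z%:~R :> R.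
  rewrite rmorphD rmorphB /= -!pmulrn (lt_le_trans _ bound) // ltrD2r.
  exact: lt_le_trans lam1_gt (ler_norm _).
rewrite ltr_int; lia.
Qed.
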